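(* Let $a>0$, $\rho>0$ and let $(k_j)_{j\ge 1}$ be a sequence of positive reals. Let $X_1,X_2,\dots$ be random variables such that each $X_j$ has the $\mathrm{GWD}(a,k_j;\rho)$ distribution and, for each $n\ge 1$, the vector $(X_1,\dots,X_n)$ has the $\mathrm{MGWD}(a;k_1,\dots,k_n;\rho)$ distribution. Put $S=\sum_{j=1}^\infty X_j$. If $m=\sum_{j=1}^\infty k_j<\infty$, then $S<\infty$ with probability $1$ and $S$ has the $\mathrm{GWD}(a,m;\rho)$ distribution. If $\sum_{j=1}^\infty k_j=\infty$, then $S=\infty$ with probability $1$.
   Context: For $x>0$ and $\beta\ge 0$ write $x_{(\beta)}=\Gamma(x+\beta)/\Gamma(x)$. For $a,k,\rho>0$ the generalized Waring distribution $\mathrm{GWD}(a,k;\rho)$ is the probability law on $\{0,1,2,\dots\}$ given by $P(X=n)=\frac{\rho_{(k)}}{(\rho+a)_{(k)}}\,\frac{a_{(n)}\,k_{(n)}}{(\rho+a+k)_{(n)}}\,\frac{1}{n!}$, $n=0,1,2,\dots$. For $a,\rho>0$ and $k_1,\dots,k_s>0$, the multivariate generalized Waring distribution $\mathrm{MGWD}(a;k_1,\dots,k_s;\rho)$ is the law of a random vector $(X_1,\dots,X_s)$ on $\{0,1,2,\dots\}^s$ with $P(X_i=x_i,\ i=1,\dots,s)=\frac{\rho_{(\sum_i k_i)}\,a_{(\sum_i x_i)}}{(\rho+a)_{(\sum_i k_i+\sum_i x_i)}}\prod_{i=1}^s\frac{(k_i)_{(x_i)}}{x_i!}$. *)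

From Stdlib Require Import Reals Factorial ClassicalEpsilon.
Open Scope R_scope.

Fixpoint sumR (f : nat -> R) (n : nat) : R :=
  match n with O => 0 | S n' => sumR f n' + f n' end.
Fixpoint prodR (f : nat -> R) (n : nat) : R :=
  match n with O => 1 | S n' => prodR f n' * f n' end.
Fixpoint sumN (f : nat -> nat) (n : nat) : nat :=
  match n with O => O | S n' => (sumN f n' + f n')%nat end.

(* Euler's Gamma function on x > 0, via Gauss' limit formula
   Gamma x = lim_n n! n^x / (x (x+1) ... (x+n)). *)
Definition gauss_seq (x : R) (n : nat) : R :=
  INR (fact n) * Rpower (INR n) x / prodR (fun i => x + INR i) (S n).
Definition Gamma (x : R) : R :=
  epsilon (inhabits 0) (fun l => Un_cv (gauss_seq x) l).

Definition rising (x beta : R) : R := Gamma (x + beta) / Gamma x.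

Definition GWD_pmf (a k rho : R) (n : nat) : R :=
  rising rho k / rising (rho + a) k
  * (rising a (INR n) * rising k (INR n) / rising (rho + a + k) (INR n))
  / INR (fact n).

Definition MGWD_pmf (a : R) (k : nat -> R) (s : nat) (rho : R) (x : nat -> nat) : R :=
  let K := sumR k s in
  let Xs := INR (sumN x s) in
  rising rho K * rising a Xs / rising (rho + a) (K + Xs)
  * prodR (fun i => rising (k i) (INR (x i)) / INR (fact (x i))) s.

(* A probability space: sigma-algebra F of events on Omega and a
   countably additive probability P (defined on all predicates,
   meaningful on events). *)
Definition is_prob_space (Omega : Type) (F : (Omega -> Prop) -> Prop)
    (P : (Omega -> Prop) -> R) : Prop :=
  F (fun _ => True)
  /\ (forall A, F A -> F (fun w => ~ A w))
  /\ (forall A : nat -> Omega -> Prop, (forall n, F (A n)) ->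
        F (fun w => exists n, A n w))
  /\ (forall A, F A -> 0 <= P A)
  /\ P (fun _ => True) = 1
  /\ (forall A : nat -> Omega -> Prop, (forall n, F (A n)) ->
        (forall i j w, i <> j -> A i w -> A j w -> False) ->
        infinite_sum (fun n => P (A n)) (P (fun w => exists n, A n w))).

Definition partial_sum {Omega : Type} (X : nat -> Omega -> nat) (w : Omega) (n : nat) : nat :=
  sumN (fun j => X j w) n.

(* S(w) = s (finite): the nondecreasing partial sums are eventually s *)
Definition S_eq {Omega : Type} (X : nat -> Omega -> nat) (w : Omega) (s : nat) : Prop :=
  exists N, forall n, (N <= n)%nat -> partial_sum X w n = s.

Definition S_inf {Omega : Type} (X : nat -> Omega -> nat) (w : Omega) : Prop :=
  forall B : nat, exists n, (B <= partial_sum X w n)%nat.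

(* The partial sums [S_n = X_0 + ... + X_(n-1)] are GWD(a, K_n; rho) with
   [K_n = k_0 + ... + k_(n-1)]: marginalizing the MGWD law one coordinate at a
   time only needs the Vandermonde identity for rising factorials.  Since
   [{S <= B}] is the decreasing intersection of the [{S_n <= B}],
   [P (S <= B) = lim_n P (S_n <= B)].
   If [K_n -> m < oo], continuity of Gamma gives [P (S <= B) = P (GWD(a, m; rho) <= B)],
   and a termwise domination [GWD(a, K_n) <= lam_n GWD(a, m)] with [lam_n -> 1]
   shows that no mass escapes to infinity.
   If [K_n -> oo], the normalizing constant of GWD(a, K_n; rho) is, up to a
   constant factor, [Gamma (rho + K_n) / Gamma (rho + K_n + a) -> 0], so
   [P (S <= B) = 0] for every [B]. *)

From Stdlib Require Import Reals Factorial Lra Lia ClassicalEpsilon Classical.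
From Stdlib Require Import FunctionalExtensionality PropExtensionality.
Open Scope R_scope.

Lemma sumR_ext (f g : nat -> R) n :
  (forall i, (i < n)%nat -> f i = g i) -> sumR f n = sumR g n.
Proof.
  induction n as [|n IH]; intros H; simpl; auto.
  rewrite IH by (intros; apply H; lia). rewrite H by lia; auto.
Qed.

Lemma prodR_ext (f g : nat -> R) n :
  (forall i, (i < n)%nat -> f i = g i) -> prodR f n = prodR g n.
Proof.
  induction n as [|n IH]; intros H; simpl; auto.
  rewrite IH by (intros; apply H; lia). rewrite H by lia; auto.
Qed.

Lemma sumN_ext (f g : nat -> nat) n :
  (forall i, (i < n)%nat -> f i = g i) -> sumN f n = sumN g n.
Proof.
  induction n as [|n IH]; intros H; simpl; auto.
  rewrite IH by (intros; apply H; lia). rewrite H by lia; auto.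
Qed.

Lemma sumR_S f n : sumR f (S n) = sumR f n + f n.
Proof. reflexivity. Qed.

Lemma prodR_S f n : prodR f (S n) = prodR f n * f n.
Proof. reflexivity. Qed.

Lemma sumR_shift f n : sumR f (S n) = f O + sumR (fun i => f (S i)) n.
Proof. induction n as [|n IH]; simpl in *; [lra|]. rewrite IH. lra. Qed.

Lemma prodR_shift f n : prodR f (S n) = f O * prodR (fun i => f (S i)) n.
Proof. induction n as [|n IH]; simpl in *; [lra|]. rewrite IH. lra. Qed.

Lemma sumN_shift f n : sumN f (S n) = (f O + sumN (fun i => f (S i)) n)%nat.
Proof. induction n as [|n IH]; simpl in *; [lia|]. rewrite IH. lia. Qed.

Lemma sumR_scal c f n : sumR (fun i => c * f i) n = c * sumR f n.
Proof. induction n as [|n IH]; simpl; [ring|]. rewrite IH; ring. Qed.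

Lemma sumR_plus f g n : sumR (fun i => f i + g i) n = sumR f n + sumR g n.
Proof. induction n as [|n IH]; simpl; [ring|]. rewrite IH; ring. Qed.

Lemma sumR_le f g n : (forall i, (i < n)%nat -> f i <= g i) -> sumR f n <= sumR g n.
Proof.
  induction n as [|n IH]; simpl; intros H; [lra|].
  assert (f n <= g n) by (apply H; lia).
  assert (sumR f n <= sumR g n) by (apply IH; intros; apply H; lia).
  lra.
Qed.

Lemma sumR_nonneg f n : (forall i, 0 <= f i) -> 0 <= sumR f n.
Proof. intros Hf. induction n as [|n IH]; simpl; [lra|]. specialize (Hf n). lra. Qed.

Lemma sumR_pos f n : (forall i, 0 < f i) -> (1 <= n)%nat -> 0 < sumR f n.
Proof. intros Hf Hn. induction Hn; simpl; [specialize (Hf O); lra|]. specialize (Hf m). lra. Qed.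

Lemma sumR_sum_f_R0 f n : sumR f (S n) = sum_f_R0 f n.
Proof. induction n as [|n IH]; simpl in *; [ring|]. rewrite <- IH. simpl. ring. Qed.

Lemma sumR_diff_le f g c n n' : (forall j, f j <= c * g j) -> (n <= n')%nat ->
  sumR f n' - sumR f n <= c * (sumR g n' - sumR g n).
Proof. intros H Hn. induction Hn as [|n' _ IH]; simpl; [lra|]. specialize (H n'). lra. Qed.

Lemma prodR_pos f n : (forall i, (i < n)%nat -> 0 < f i) -> 0 < prodR f n.
Proof.
  induction n as [|n IH]; simpl; intros H; [lra|].
  apply Rmult_lt_0_compat; [apply IH; intros|]; apply H; lia.
Qed.

Lemma prodR_le f g n : (forall i, (i < n)%nat -> 0 <= f i <= g i) -> prodR f n <= prodR g n.
Proof.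
  induction n as [|n IH]; simpl; intros H; [lra|].
  assert (Hn : 0 <= f n <= g n) by (apply H; lia).
  assert (Hf : 0 <= prodR f n).
  { clear IH Hn. induction n as [|n IHn]; simpl; [lra|].
    apply Rmult_le_pos; [apply IHn; intros|]; apply H; lia. }
  apply Rmult_le_compat; try lra. apply IH; intros; apply H; lia.
Qed.

Lemma prodR_div f g n : (forall i, (i < n)%nat -> g i <> 0) ->
  prodR f n / prodR g n = prodR (fun i => f i / g i) n.
Proof.
  induction n as [|n IH]; simpl; intros H; [field|].
  assert (prodR g n <> 0).
  { clear IH. induction n as [|n IHn]; simpl; [lra|].
    apply Rmult_integral_contrapositive; split; [apply IHn; intros|]; apply H; lia. }
  assert (g n <> 0) by (apply H; lia).
  rewrite <- IH by (intros; apply H; lia). field; auto.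
Qed.

(** * Rising factorials and a Vandermonde identity *)

Definition poch (u : R) (j : nat) : R := prodR (fun i => u + INR i) j.

(* [(u)_j / j!], the [j]-th coefficient of [(1 - z)^(-u)]. *)
Definition negbin_coef (u : R) (j : nat) : R := poch u j / INR (fact j).

Lemma poch_pos u j : 0 < u -> 0 < poch u j.
Proof. intros Hu. apply prodR_pos. intros i _. pose proof (pos_INR i). lra. Qed.

Lemma negbin_coef_0 u : negbin_coef u 0 = 1.
Proof. unfold negbin_coef, poch; simpl. field. Qed.

Lemma negbin_coef_zero_S j : negbin_coef 0 (S j) = 0.
Proof.
  unfold negbin_coef, poch. rewrite prodR_shift. simpl (INR 0).
  rewrite Rplus_0_r, Rmult_0_l. unfold Rdiv; ring.
Qed.

Lemma negbin_coef_S u j : INR (S j) * negbin_coef u (S j) = (u + INR j) * negbin_coef u j.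
Proof.
  unfold negbin_coef, poch. simpl prodR. rewrite fact_simpl, mult_INR.
  pose proof (INR_fact_lt_0 j). assert (0 < INR (S j)) by (apply lt_0_INR; lia).
  field. lra.
Qed.

Definition negbin_conv (u v : R) (j : nat) : R :=
  sumR (fun t => negbin_coef u t * negbin_coef v (j - t)) (S j).

(* Both sides of the Vandermonde identity satisfy this first-order recurrence. *)
Lemma negbin_conv_S u v j :
  INR (S j) * negbin_conv u v (S j) = (u + v + INR j) * negbin_conv u v j.
Proof.
  unfold negbin_conv. rewrite <- sumR_scal.
  rewrite (sumR_ext _ (fun t => INR t * negbin_coef u t * negbin_coef v (S j - t)
            + negbin_coef u t * (INR (S j - t) * negbin_coef v (S j - t))))
    by (intros t Ht; rewrite minus_INR by lia; ring).
  rewrite sumR_plus, sumR_shift. simpl (INR 0).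
  rewrite Rmult_0_l, Rmult_0_l, Rplus_0_l.
  rewrite (sumR_ext _ (fun t => (u + INR t) * negbin_coef u t * negbin_coef v (j - t)))
    by (intros t Ht; rewrite negbin_coef_S; replace (S j - S t)%nat with (j - t)%nat by lia; ring).
  rewrite (sumR_S (fun t => negbin_coef u t * (INR (S j - t) * negbin_coef v (S j - t)))).
  rewrite Nat.sub_diag. simpl (INR 0). rewrite Rmult_0_l, Rmult_0_r, Rplus_0_r.
  rewrite <- sumR_plus, <- sumR_scal. apply sumR_ext. intros t Ht.
  replace (S j - t)%nat with (S (j - t)) by lia.
  rewrite negbin_coef_S, minus_INR by lia. ring.
Qed.

Lemma negbin_vandermonde u v j : negbin_conv u v j = negbin_coef (u + v) j.
Proof.
  induction j as [|j IH].
  - unfold negbin_conv; simpl. rewrite !negbin_coef_0. ring.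
  - pose proof (negbin_conv_S u v j) as H. rewrite IH, <- negbin_coef_S in H.
    assert (0 < INR (S j)) by (apply lt_0_INR; lia).
    apply Rmult_eq_reg_l with (INR (S j)); lra.
Qed.

Lemma Un_cv_const c : Un_cv (fun _ => c) c.
Proof. intros e He. exists O. intros. unfold R_dist. rewrite Rminus_diag, Rabs_R0. lra. Qed.

Lemma Un_cv_S (u : nat -> R) l : Un_cv u l -> Un_cv (fun n => u (S n)) l.
Proof. intros H e He. destruct (H e He) as [N HN]. exists N. intros n Hn. apply HN; lia. Qed.

Lemma Un_cv_S_inv (u : nat -> R) l : Un_cv (fun n => u (S n)) l -> Un_cv u l.
Proof.
  intros H e He. destruct (H e He) as [N HN]. exists (S N). intros [|n] Hn; [lia|].
  apply HN; lia.
Qed.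

Lemma Un_cv_le_eventually (u : nat -> R) l b N :
  Un_cv u l -> (forall n, (N <= n)%nat -> u n <= b) -> l <= b.
Proof.
  intros Hu Hb. apply Rnot_lt_le. intros Hlt.
  destruct (Hu (l - b)) as [M HM]; [lra|].
  specialize (HM (max N M) ltac:(lia)). specialize (Hb (max N M) ltac:(lia)).
  unfold R_dist in HM. apply Rabs_def2 in HM. lra.
Qed.

Lemma continuity_pt_id x : continuity_pt (fun y => y) x.
Proof. apply derivable_continuous_pt, derivable_pt_id. Qed.

Lemma Un_cv_div (u v : nat -> R) l1 l2 :
  Un_cv u l1 -> Un_cv v l2 -> l2 <> 0 -> Un_cv (fun n => u n / v n) (l1 / l2).
Proof.
  intros Hu Hv Hl. unfold Rdiv. apply CV_mult; auto.
  apply (continuity_seq (fun x => / x)); auto.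
  apply (continuity_pt_inv (fun x => x)); auto. apply continuity_pt_id.
Qed.

Lemma Un_cv_div_INR c d : 0 < d -> Un_cv (fun n => c / (INR n + d)) 0.
Proof.
  intros Hd e He. destruct (INR_archimed e (Rabs c) He) as [N HN]. exists N.
  intros n Hn. unfold R_dist. rewrite Rminus_0_r.
  pose proof (pos_INR n). assert (INR N <= INR n) by (apply le_INR; lia).
  unfold Rdiv. rewrite Rabs_mult, Rabs_inv, (Rabs_right (INR n + d)) by lra.
  apply Rmult_lt_reg_r with (INR n + d); [lra|]. rewrite Rmult_assoc, Rinv_l by lra.
  assert (e * INR N <= e * (INR n + d)) by (apply Rmult_le_compat_l; lra). lra.
Qed.

Lemma exists_nat_gt x : exists n : nat, x < INR n.
Proof. destruct (INR_archimed 1 x) as [n Hn]; [lra|]. exists n. lra. Qed.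

Lemma Rdiv_le_0_compat x y : 0 <= x -> 0 < y -> 0 <= x / y.
Proof. intros. unfold Rdiv. apply Rmult_le_pos; auto. left; apply Rinv_0_lt_compat; auto. Qed.

Lemma ln_div x y : 0 < x -> 0 < y -> ln (x / y) = ln x - ln y.
Proof. intros. unfold Rdiv. rewrite ln_mult, ln_Rinv; try lra. apply Rinv_0_lt_compat; auto. Qed.

Lemma ln_le_sub1 z : 0 < z -> ln z <= z - 1.
Proof. intros Hz. pose proof (exp_ineq1_le (ln z)) as H. rewrite exp_ln in H; lra. Qed.

Lemma ln_succ_bounds p : 0 < p -> / (p + 1) <= ln (p + 1) - ln p <= / p.
Proof.
  intros Hp. split.
  - pose proof (ln_le_sub1 (p / (p + 1)) ltac:(apply Rdiv_lt_0_compat; lra)) as H.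
    rewrite ln_div in H by lra. assert (p / (p + 1) - 1 = - / (p + 1)) by (field; lra). lra.
  - pose proof (ln_le_sub1 ((p + 1) / p) ltac:(apply Rdiv_lt_0_compat; lra)) as H.
    rewrite ln_div in H by lra. assert ((p + 1) / p - 1 = / p) by (field; lra). lra.
Qed.

Lemma exp_le_mono x y : x <= y -> exp x <= exp y.
Proof. intros [H|H]; [left; apply exp_increasing; auto | subst; lra]. Qed.

Lemma exp_le_1_plus_2x t : 0 <= t <= / 2 -> exp t <= 1 + 2 * t.
Proof.
  intros Ht. pose proof (exp_ineq1_le (- t)).
  assert (exp t * exp (- t) = 1) by (rewrite <- exp_plus, Rplus_opp_r; apply exp_0).
  pose proof (exp_pos t). nra.
Qed.

(** * Euler's Gamma function *)

(* Gauss' sequence [g_n] increases while [g_n exp (c / n)] decreases, with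
   [c = gauss_err x]; both converge to [Gamma x]. *)
Definition gauss_err (x : R) : R := x * (1 + x).

Definition gauss_step (x p : R) : R := (p + 1) * exp (x * (ln (p + 1) - ln p)) / (x + p + 1).

Lemma gauss_err_mono x y : 0 <= x <= y -> gauss_err x <= gauss_err y.
Proof. unfold gauss_err. intros. nra. Qed.

Lemma gauss_seq_pos x n : 0 < x -> 0 < gauss_seq x n.
Proof.
  intros Hx. unfold gauss_seq, Rpower. apply Rdiv_lt_0_compat.
  - apply Rmult_lt_0_compat; [apply INR_fact_lt_0 | apply exp_pos].
  - apply (poch_pos x (S n) Hx).
Qed.

Lemma gauss_seq_S x n : 0 < x ->
  gauss_seq x (S (S n)) = gauss_seq x (S n) * gauss_step x (INR (S n)).
Proof.
  intros Hx. unfold gauss_seq, Rpower, gauss_step.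
  rewrite (prodR_S _ (S (S n))), (fact_simpl (S n)), mult_INR.
  replace (INR (S (S n))) with (INR (S n) + 1) by (rewrite (S_INR (S n)); ring).
  replace (exp (x * ln (INR (S n) + 1))) with
    (exp (x * ln (INR (S n))) * exp (x * (ln (INR (S n) + 1) - ln (INR (S n)))))
    by (rewrite <- exp_plus; f_equal; ring).
  pose proof (poch_pos x (S (S n)) Hx). pose proof (lt_0_INR (S n) ltac:(lia)).
  unfold poch in *. field. split; lra.
Qed.

Lemma gauss_step_ge1 x p : 0 < x -> 0 < p -> 1 <= gauss_step x p.
Proof.
  intros Hx Hp. unfold gauss_step. destruct (ln_succ_bounds p Hp) as [H1 _].
  assert (Hlog : (x + p + 1) / (p + 1) <= exp (x * (ln (p + 1) - ln p))).
  { apply Rle_trans with (exp (x / (p + 1))).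
    - pose proof (exp_ineq1_le (x / (p + 1))).
      assert (1 + x / (p + 1) = (x + p + 1) / (p + 1)) by (field; lra). lra.
    - apply exp_le_mono. unfold Rdiv. apply Rmult_le_compat_l; lra. }
  apply Rle_trans with ((p + 1) * ((x + p + 1) / (p + 1)) / (x + p + 1)); [right; field; lra|].
  unfold Rdiv at 2 3. apply Rmult_le_compat_r; [left; apply Rinv_0_lt_compat; lra|].
  apply Rmult_le_compat_l; lra.
Qed.

Lemma gauss_step_le x p : 0 < x -> 0 < p ->
  gauss_step x p <= exp (gauss_err x / p - gauss_err x / (p + 1)).
Proof.
  intros Hx Hp. unfold gauss_step. destruct (ln_succ_bounds p Hp) as [_ H2].
  assert (E1 : exp (x * (ln (p + 1) - ln p)) <= exp (x / p)).
  { apply exp_le_mono. unfold Rdiv. apply Rmult_le_compat_l; lra. }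
  assert (E2 : (p + 1) / (x + p + 1) <= exp (- (x / (x + p + 1)))).
  { pose proof (exp_ineq1_le (- (x / (x + p + 1)))).
    assert (1 + - (x / (x + p + 1)) = (p + 1) / (x + p + 1)) by (field; lra). lra. }
  assert (E3 : x / p - x / (x + p + 1) <= gauss_err x / p - gauss_err x / (p + 1)).
  { unfold gauss_err.
    replace (x / p - x / (x + p + 1)) with (x * (1 + x) / (p * (x + p + 1))) by (field; lra).
    replace (x * (1 + x) / p - x * (1 + x) / (p + 1)) with (x * (1 + x) / (p * (p + 1)))
      by (field; lra).
    unfold Rdiv. apply Rmult_le_compat_l; [nra|]. apply Rinv_le_contravar; nra. }
  replace ((p + 1) * exp (x * (ln (p + 1) - ln p)) / (x + p + 1)) with
    ((p + 1) / (x + p + 1) * exp (x * (ln (p + 1) - ln p))) by (field; lra).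
  apply Rle_trans with (exp (- (x / (x + p + 1))) * exp (x / p)).
  - apply Rmult_le_compat; auto; [apply Rdiv_le_0_compat; lra | left; apply exp_pos].
  - rewrite <- exp_plus. apply exp_le_mono. lra.
Qed.

Section GaussSandwich.
Variable x : R.
Hypothesis Hx : 0 < x.

Definition gauss_upper (n : nat) : R := gauss_seq x (S n) * exp (gauss_err x / INR (S n)).

Lemma gauss_seq_growing : Un_growing (fun n => gauss_seq x (S n)).
Proof.
  intros n; cbv beta. rewrite gauss_seq_S by auto.
  pose proof (gauss_step_ge1 x (INR (S n)) Hx (lt_0_INR (S n) ltac:(lia))).
  pose proof (gauss_seq_pos x (S n) Hx). nra.
Qed.

Lemma gauss_upper_decr n : gauss_upper (S n) <= gauss_upper n.
Proof.
  unfold gauss_upper. rewrite gauss_seq_S, Rmult_assoc by auto.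
  pose proof (gauss_seq_pos x (S n) Hx).
  apply Rmult_le_compat_l; [lra|]. rewrite (S_INR (S n)).
  apply Rle_trans with (exp (gauss_err x / INR (S n) - gauss_err x / (INR (S n) + 1))
                        * exp (gauss_err x / (INR (S n) + 1))).
  - apply Rmult_le_compat_r; [left; apply exp_pos|].
    apply gauss_step_le; auto. apply lt_0_INR; lia.
  - rewrite <- exp_plus. right; f_equal; ring.
Qed.

Lemma gauss_upper_anti n m : (n <= m)%nat -> gauss_upper m <= gauss_upper n.
Proof. induction 1; [lra|]. pose proof (gauss_upper_decr m). lra. Qed.

Lemma gauss_seq_le_upper n : gauss_seq x (S n) <= gauss_upper n.
Proof.
  unfold gauss_upper. pose proof (gauss_seq_pos x (S n) Hx).
  assert (0 <= gauss_err x / INR (S n))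
    by (apply Rdiv_le_0_compat; [unfold gauss_err; nra | apply lt_0_INR; lia]).
  pose proof (exp_ineq1_le (gauss_err x / INR (S n))). nra.
Qed.

Lemma Gamma_cv : Un_cv (gauss_seq x) (Gamma x).
Proof.
  assert (Hub : has_ub (fun n => gauss_seq x (S n))).
  { exists (gauss_upper O). intros y [n ->].
    apply Rle_trans with (gauss_upper n); [apply gauss_seq_le_upper | apply gauss_upper_anti; lia]. }
  destruct (growing_cv _ gauss_seq_growing Hub) as [l Hl].
  unfold Gamma. apply (epsilon_spec (inhabits 0) (fun l => Un_cv (gauss_seq x) l)).
  exists l. apply Un_cv_S_inv, Hl.
Qed.

Lemma gauss_seq_le_Gamma n : gauss_seq x (S n) <= Gamma x.
Proof. apply (growing_ineq _ _ gauss_seq_growing), Un_cv_S, Gamma_cv. Qed.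

Lemma Gamma_le_gauss_upper n : Gamma x <= gauss_upper n.
Proof.
  apply (Un_cv_le_eventually _ _ _ n (Un_cv_S _ _ Gamma_cv)). intros m Hm.
  apply Rle_trans with (gauss_upper m); [apply gauss_seq_le_upper | apply gauss_upper_anti; auto].
Qed.

Lemma Gamma_pos : 0 < Gamma x.
Proof. apply Rlt_le_trans with (gauss_seq x 1); [apply gauss_seq_pos; auto | apply (gauss_seq_le_Gamma 0)]. Qed.

End GaussSandwich.

Lemma Gamma_sub_gauss_seq_le y n : 0 < y -> 2 * gauss_err y <= INR (S n) ->
  0 <= Gamma y - gauss_seq y (S n) <= 2 * Gamma y * gauss_err y / INR (S n).
Proof.
  intros Hy Hn.
  pose proof (gauss_seq_le_Gamma y Hy n). pose proof (Gamma_le_gauss_upper y Hy n).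
  pose proof (gauss_seq_pos y (S n) Hy). unfold gauss_upper in *.
  assert (HS : 0 < INR (S n)) by (apply lt_0_INR; lia).
  set (t := gauss_err y / INR (S n)) in *.
  assert (Ht : 0 <= t <= / 2).
  { split; [apply Rdiv_le_0_compat; [unfold gauss_err; nra | lra]|].
    apply Rmult_le_reg_r with (INR (S n)); auto.
    unfold t, Rdiv. rewrite Rmult_assoc, Rinv_l by lra. lra. }
  pose proof (exp_le_1_plus_2x t Ht).
  replace (2 * Gamma y * gauss_err y / INR (S n)) with (Gamma y * (2 * t)) by (unfold t; field; lra).
  split; nra.
Qed.

Lemma gauss_seq_1 x : 0 < x -> gauss_seq x 1 = / (x * (x + 1)).
Proof. intros. unfold gauss_seq, Rpower. simpl. rewrite ln_1, Rmult_0_r, exp_0. field. lra. Qed.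

Lemma Gamma_le_unit x : 0 < x -> Gamma x <= exp (gauss_err x) / (x * (x + 1)).
Proof.
  intros Hx. pose proof (Gamma_le_gauss_upper x Hx 0) as H. unfold gauss_upper in H.
  rewrite gauss_seq_1 in H by auto. simpl (INR 1) in H. rewrite Rdiv_1_r in H.
  unfold Rdiv. rewrite Rmult_comm. exact H.
Qed.

Lemma Gamma_ge_unit x : 0 < x -> / (x * (x + 1)) <= Gamma x.
Proof. intros Hx. rewrite <- gauss_seq_1 by auto. apply (gauss_seq_le_Gamma x Hx 0). Qed.

Lemma gauss_seq_shift1 x n : 0 < x ->
  gauss_seq (x + 1) (S n) = gauss_seq x (S n) * (x * (INR (S n) / (x + 1 + INR (S n)))).
Proof.
  intros Hx. unfold gauss_seq, Rpower.
  assert (E : prodR (fun i => x + INR i) (S (S (S n)))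
              = x * prodR (fun i => x + 1 + INR i) (S (S n))).
  { rewrite prodR_shift. simpl (INR 0). rewrite Rplus_0_r. f_equal.
    apply prodR_ext. intros. rewrite S_INR; ring. }
  rewrite prodR_S, (S_INR (S n)) in E.
  replace ((x + 1) * ln (INR (S n))) with (x * ln (INR (S n)) + ln (INR (S n))) by ring.
  rewrite exp_plus, exp_ln by (apply lt_0_INR; lia).
  pose proof (poch_pos x (S (S n)) Hx). pose proof (poch_pos (x + 1) (S (S n)) ltac:(lra)).
  pose proof (lt_0_INR (S n) ltac:(lia)). unfold poch in *.
  set (A := prodR (fun i => x + INR i) (S (S n))) in *.
  set (B := prodR (fun i => x + 1 + INR i) (S (S n))) in *.
  set (c := INR (S n)) in *.
  replace B with (A * (x + (c + 1)) / x) by (rewrite E; field; lra).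
  field. repeat split; lra.
Qed.

Lemma Gamma_S x : 0 < x -> Gamma (x + 1) = x * Gamma x.
Proof.
  intros Hx.
  assert (Hfrac : Un_cv (fun n => x * (INR (S n) / (x + 1 + INR (S n)))) (x * 1)).
  { apply CV_mult; [apply Un_cv_const|].
    apply Un_cv_ext with (fun n => 1 - (x + 1) / (INR n + (x + 2))).
    { intros n. rewrite S_INR. pose proof (pos_INR n). field. lra. }
    pose proof (CV_minus _ _ _ _ (Un_cv_const 1) (Un_cv_div_INR (x + 1) (x + 2) ltac:(lra))) as H.
    rewrite Rminus_0_r in H. exact H. }
  pose proof (CV_mult _ _ _ _ (Un_cv_S _ _ (Gamma_cv x Hx)) Hfrac) as Hprod.
  apply (Un_cv_ext _ (fun n => gauss_seq (x + 1) (S n))) in Hprod;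
    [| intros n; rewrite gauss_seq_shift1; auto].
  rewrite (UL_sequence _ _ _ (Un_cv_S _ _ (Gamma_cv (x + 1) ltac:(lra))) Hprod). ring.
Qed.

Lemma rising_poch u j : 0 < u -> rising u (INR j) = poch u j.
Proof.
  intros Hu. pose proof (Gamma_pos u Hu). unfold rising, poch. induction j as [|j IH].
  - simpl. rewrite Rplus_0_r. field. lra.
  - rewrite prodR_S, <- IH, S_INR, <- Rplus_assoc. pose proof (pos_INR j).
    rewrite Gamma_S by lra. field. lra.
Qed.

Lemma rising_add c K t : 0 < c -> 0 < K ->
  rising c (K + INR t) = rising c K * poch (c + K) t.
Proof.
  intros Hc HK. rewrite <- rising_poch by lra. unfold rising.
  rewrite <- Rplus_assoc.
  pose proof (Gamma_pos c Hc). pose proof (Gamma_pos (c + K) ltac:(lra)).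
  field. lra.
Qed.

Lemma continuity_pt_poch j y : continuity_pt (fun y => poch y j) y.
Proof.
  unfold poch. induction j as [|j IH]; simpl.
  - apply continuity_pt_const. intros u v; reflexivity.
  - apply (continuity_pt_mult (fun y => prodR (fun i => y + INR i) j)); auto.
    apply (continuity_pt_plus (fun y => y)); [apply continuity_pt_id|].
    apply continuity_pt_const. intros u v; reflexivity.
Qed.

Lemma continuity_pt_gauss_seq n y : 0 < y -> continuity_pt (fun y => gauss_seq y n) y.
Proof.
  intros Hy. unfold gauss_seq, Rpower.
  apply (continuity_pt_div (fun y => INR (fact n) * exp (y * ln (INR n)))
                           (fun y => poch y (S n))).
  - apply (continuity_pt_mult (fun _ => INR (fact n))).
    + apply continuity_pt_const. intros u v; reflexivity.
    + apply (continuity_pt_comp (fun y => y * ln (INR n)) exp).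
      * apply (continuity_pt_mult (fun y => y)); [apply continuity_pt_id|].
        apply continuity_pt_const. intros u v; reflexivity.
      * apply derivable_continuous_pt, derivable_pt_exp.
  - apply continuity_pt_poch.
  - apply Rgt_not_eq, poch_pos; auto.
Qed.

(* On [[z/2, 3z/2]], [Gamma <= U] and [gauss_err <= C], so the error bound
   [2 Gamma y gauss_err y / (n + 1)] of Gauss' sequence is uniform. *)
Lemma Gamma_continuous z : 0 < z -> continuity_pt Gamma z.
Proof.
  intros Hz. set (r := mkposreal (z / 2) ltac:(lra)).
  apply (CVU_continuity (fun n y => gauss_seq y (S n)) Gamma z r).
  3: { unfold Boule; simpl. rewrite Rminus_diag, Rabs_R0. lra. }
  2: { intros n y Hy. unfold Boule in Hy; simpl in Hy. apply Rabs_def2 in Hy.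
       apply continuity_pt_gauss_seq. lra. }
  set (C := gauss_err (3 * z / 2)). set (U := exp C / (z / 2 * (z / 2))).
  assert (HC : 0 <= C) by (unfold C, gauss_err; nra).
  assert (HU : 0 < U) by (apply Rdiv_lt_0_compat; [apply exp_pos | nra]).
  intros e He. destruct (exists_nat_gt (Rmax (2 * C) (2 * U * C / e))) as [N HN].
  exists N. intros n y Hn Hy. unfold Boule in Hy; simpl in Hy. apply Rabs_def2 in Hy.
  assert (Hy0 : 0 < y) by lra.
  assert (HCy : gauss_err y <= C) by (apply gauss_err_mono; lra).
  assert (HUy : Gamma y <= U).
  { apply Rle_trans with (1 := Gamma_le_unit y Hy0). unfold U, Rdiv.
    apply Rmult_le_compat; [left; apply exp_pos | left; apply Rinv_0_lt_compat; nra | |].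
    - apply exp_le_mono; lra.
    - apply Rinv_le_contravar; nra. }
  assert (Hn' : Rmax (2 * C) (2 * U * C / e) < INR (S n))
    by (apply Rlt_le_trans with (INR N); [lra | apply le_INR; lia]).
  pose proof (Rmax_l (2 * C) (2 * U * C / e)). pose proof (Rmax_r (2 * C) (2 * U * C / e)).
  assert (HS : 0 < INR (S n)) by (apply lt_0_INR; lia).
  destruct (Gamma_sub_gauss_seq_le y n Hy0 ltac:(lra)) as [Hlo Hhi].
  rewrite Rabs_right by lra. apply Rle_lt_trans with (1 := Hhi).
  assert (0 <= gauss_err y) by (unfold gauss_err; nra).
  pose proof (Gamma_pos y Hy0).
  apply Rmult_lt_reg_r with (INR (S n)); auto. unfold Rdiv.
  rewrite Rmult_assoc, Rinv_l, Rmult_1_r by lra.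
  apply Rle_lt_trans with (2 * U * C).
  - rewrite !Rmult_assoc. apply Rmult_le_compat_l; [lra|]. apply Rmult_le_compat; lra.
  - assert (Hlt : 2 * U * C / e < INR (S n)) by lra.
    apply Rmult_lt_compat_l with (r := e) in Hlt; auto.
    replace (e * (2 * U * C / e)) with (2 * U * C) in Hlt by (field; lra). lra.
Qed.

(* Anchored on [[1, 2]], where Gamma is bounded above and away from 0, and
   propagated by [Gamma (x + 1) = x Gamma x] into a product [step_prod N]
   that decays like [N^(-a)]. *)
Section GammaRatio.
Variable a : R.
Hypothesis Ha : 0 < a.

Let ratio_bound := exp (gauss_err 2) / 2 * ((a + 2) * (a + 3)).
Let step_prod (N : nat) := prodR (fun i => (2 + INR i) / (2 + a + INR i)) N.

Lemma Gamma_ratio_S x : 0 < x ->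
  Gamma (x + 1) / Gamma (x + 1 + a) = Gamma x / Gamma (x + a) * (x / (x + a)).
Proof.
  intros Hx. replace (x + 1 + a) with ((x + a) + 1) by ring.
  rewrite !Gamma_S by lra.
  pose proof (Gamma_pos x Hx). pose proof (Gamma_pos (x + a) ltac:(lra)).
  field. lra.
Qed.

Lemma Gamma_ratio_le_anchor N y : 1 + INR N <= y <= 2 + INR N ->
  Gamma y / Gamma (y + a) <= ratio_bound * step_prod N.
Proof.
  revert y. induction N as [|N IH]; intros y Hy.
  - unfold step_prod, ratio_bound; simpl in *. rewrite Rmult_1_r, Rplus_0_r in *.
    pose proof (Gamma_ge_unit (y + a) ltac:(lra)).
    assert (Hnum : Gamma y <= exp (gauss_err 2) / 2).
    { apply Rle_trans with (1 := Gamma_le_unit y ltac:(lra)). unfold Rdiv.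
      apply Rmult_le_compat; [left; apply exp_pos | left; apply Rinv_0_lt_compat; nra | |].
      - apply exp_le_mono, gauss_err_mono; lra.
      - apply Rinv_le_contravar; nra. }
    assert (Hden : / Gamma (y + a) <= (a + 2) * (a + 3)).
    { apply Rle_trans with ((y + a) * (y + a + 1)); [|apply Rmult_le_compat; lra].
      rewrite <- (Rinv_inv ((y + a) * (y + a + 1))).
      apply Rinv_le_contravar; auto. apply Rinv_0_lt_compat; nra. }
    unfold Rdiv at 1. apply Rmult_le_compat; auto; [left; apply Gamma_pos; lra|].
    left; apply Rinv_0_lt_compat, Gamma_pos; lra.
  - rewrite S_INR in Hy. pose proof (pos_INR N).
    replace y with ((y - 1) + 1) by ring. rewrite Gamma_ratio_S by lra.
    unfold step_prod. rewrite prodR_S, <- Rmult_assoc.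
    assert (0 <= Gamma (y - 1) / Gamma (y - 1 + a))
      by (apply Rdiv_le_0_compat; [left |]; apply Gamma_pos; lra).
    apply Rmult_le_compat; auto; [apply Rdiv_le_0_compat; lra | apply IH; lra |].
    apply Rmult_le_reg_r with ((y - 1 + a) * (2 + a + INR N)); [nra|].
    replace ((y - 1) / (y - 1 + a) * ((y - 1 + a) * (2 + a + INR N)))
      with ((y - 1) * (2 + a + INR N)) by (field; lra).
    replace ((2 + INR N) / (2 + a + INR N) * ((y - 1 + a) * (2 + a + INR N)))
      with ((2 + INR N) * (y - 1 + a)) by (field; lra).
    nra.
Qed.

Lemma step_prod_le N : step_prod N <= exp (- a * (ln (2 + a + INR N) - ln (2 + a))).
Proof.
  induction N as [|N IH].
  - unfold step_prod; simpl. rewrite Rplus_0_r, Rminus_diag, Rmult_0_r, exp_0. lra.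
  - unfold step_prod in *. rewrite prodR_S. set (w := 2 + a + INR N).
    pose proof (pos_INR N). assert (Hw : 0 < w) by (unfold w; lra).
    assert (0 <= prodR (fun i => (2 + INR i) / (2 + a + INR i)) N).
    { left; apply prodR_pos. intros i _. pose proof (pos_INR i). apply Rdiv_lt_0_compat; lra. }
    assert (E1 : (2 + INR N) / w <= exp (- (a / w))).
    { pose proof (exp_ineq1_le (- (a / w))).
      replace ((2 + INR N) / w) with (1 + - (a / w)) by (unfold w; field; lra). lra. }
    destruct (ln_succ_bounds w Hw) as [_ L2].
    apply Rle_trans with (exp (- a * (ln w - ln (2 + a))) * exp (- (a / w))).
    + apply Rmult_le_compat; auto. apply Rdiv_le_0_compat; lra.
    + rewrite <- exp_plus. apply exp_le_mono. rewrite S_INR.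
      replace (2 + a + (INR N + 1)) with (w + 1) by (unfold w; ring).
      assert (a * (ln (w + 1) - ln w) <= a / w) by (unfold Rdiv; apply Rmult_le_compat_l; lra).
      lra.
Qed.

Lemma exists_unit_interval x : 1 <= x -> exists N : nat, 1 + INR N <= x <= 2 + INR N.
Proof.
  intros Hx. destruct (exists_nat_gt (x - 1)) as [M HM]. revert x Hx HM.
  induction M as [|M IH]; intros x Hx HM; [simpl in HM; lra|].
  rewrite S_INR in HM. destruct (Rlt_dec (x - 1) (INR M)) as [Hlt|Hge].
  - apply IH; auto.
  - exists M. lra.
Qed.

Lemma Gamma_ratio_vanishes e : 0 < e ->
  exists x0, forall x, x0 <= x -> Gamma x / Gamma (x + a) < e.
Proof.
  intros He. set (c := 2 + a). assert (Hc : 0 < c) by (unfold c; lra).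
  assert (HR : 0 < ratio_bound).
  { apply Rmult_lt_0_compat; [apply Rdiv_lt_0_compat; [apply exp_pos | lra] | nra]. }
  set (T := (ln (ratio_bound / e) + a * ln c) / a).
  destruct (exists_nat_gt (exp T)) as [N0 HN0]. pose proof (pos_INR N0).
  exists (2 + INR N0). intros x Hx.
  destruct (exists_unit_interval x ltac:(lra)) as [N HN].
  assert (HNN : INR N0 <= INR N) by lra.
  apply Rle_lt_trans with (1 := Gamma_ratio_le_anchor N x HN).
  apply Rle_lt_trans with (ratio_bound * exp (- a * (ln (c + INR N) - ln c))).
  { apply Rmult_le_compat_l; [lra | apply step_prod_le]. }
  assert (HT : T < ln (c + INR N)).
  { rewrite <- (ln_exp T). apply ln_increasing; [apply exp_pos | unfold c; lra]. }
  assert (E : - a * (ln (c + INR N) - ln c) < ln (e / ratio_bound)).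
  { unfold T in HT. apply Rmult_lt_compat_l with (r := a) in HT; auto.
    replace (a * ((ln (ratio_bound / e) + a * ln c) / a)) with (ln (ratio_bound / e) + a * ln c)
      in HT by (field; lra).
    rewrite ln_div in HT by lra. rewrite ln_div by lra. lra. }
  apply exp_increasing in E. rewrite exp_ln in E by (apply Rdiv_lt_0_compat; auto).
  apply Rmult_lt_compat_l with (r := ratio_bound) in E; auto.
  replace (ratio_bound * (e / ratio_bound)) with e in E by (field; lra). exact E.
Qed.

End GammaRatio.

(** * Probability spaces *)

Lemma pred_ext {Omega : Type} (A B : Omega -> Prop) : (forall w, A w <-> B w) -> A = B.
Proof.
  intros H. apply functional_extensionality. intros w.
  apply propositional_extensionality. auto.
Qed.

Lemma sum_f_R0_const c n : sum_f_R0 (fun _ => c) n = INR (S n) * c.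
Proof. induction n as [|n IH]; simpl sum_f_R0; [simpl; ring|]. rewrite IH, (S_INR (S n)). ring. Qed.

Section ProbSpace.
Variable Omega : Type.
Variable F : (Omega -> Prop) -> Prop.
Variable P : (Omega -> Prop) -> R.
Hypothesis HP : is_prob_space Omega F P.
#[local] Set Default Proof Using "All".

Lemma F_full : F (fun _ => True).
Proof. apply HP. Qed.

Lemma F_compl A : F A -> F (fun w => ~ A w).
Proof. apply HP. Qed.

Lemma F_union (A : nat -> Omega -> Prop) :
  (forall n, F (A n)) -> F (fun w => exists n, A n w).
Proof. apply HP. Qed.

Lemma P_nonneg A : F A -> 0 <= P A.
Proof. apply HP. Qed.

Lemma P_full : P (fun _ => True) = 1.
Proof. apply HP. Qed.

Lemma P_sigma_additive (A : nat -> Omega -> Prop) : (forall n, F (A n)) ->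
  (forall i j w, i <> j -> A i w -> A j w -> False) ->
  infinite_sum (fun n => P (A n)) (P (fun w => exists n, A n w)).
Proof. apply HP. Qed.

Lemma F_ext A B : F A -> (forall w, A w <-> B w) -> F B.
Proof. intros H E. rewrite <- (pred_ext _ _ E). auto. Qed.

Lemma P_ext A B : (forall w, A w <-> B w) -> P A = P B.
Proof. intros E. rewrite (pred_ext _ _ E). auto. Qed.

Lemma F_empty : F (fun _ => False).
Proof. apply (F_ext _ _ (F_compl _ F_full)). tauto. Qed.

Definition seq_of_two (A B : Omega -> Prop) (n : nat) : Omega -> Prop :=
  match n with O => A | S O => B | _ => fun _ => False end.

Lemma seq_of_two_union A B w : (exists n, seq_of_two A B n w) <-> A w \/ B w.
Proof.
  split.
  - intros [[|[|n]] H]; simpl in H; tauto.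
  - intros [H|H]; [exists O | exists (S O)]; exact H.
Qed.

Lemma F_seq_of_two A B n : F A -> F B -> F (seq_of_two A B n).
Proof. intros. destruct n as [|[|n]]; simpl; auto using F_empty. Qed.

Lemma F_or A B : F A -> F B -> F (fun w => A w \/ B w).
Proof.
  intros HA HB. apply (F_ext (fun w => exists n, seq_of_two A B n w)).
  - apply F_union. intros; apply F_seq_of_two; auto.
  - apply seq_of_two_union.
Qed.

Lemma F_and A B : F A -> F B -> F (fun w => A w /\ B w).
Proof. intros HA HB. apply (F_ext (fun w => ~ (~ A w \/ ~ B w))); [auto using F_compl, F_or | intros w; tauto]. Qed.

Lemma F_all (A : nat -> Omega -> Prop) :
  (forall n, F (A n)) -> F (fun w => forall n, A n w).
Proof.
  intros H. apply (F_ext (fun w => ~ exists n, ~ A n w)).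
  - apply F_compl, F_union. intros; apply F_compl; auto.
  - intros w. split; [|firstorder]. intros H1 n. apply NNPP. eauto.
Qed.

Lemma P_empty : P (fun _ => False) = 0.
Proof.
  pose proof (P_sigma_additive (fun _ _ => False) (fun _ => F_empty) ltac:(auto)) as H. cbv beta in H.
  rewrite (P_ext (fun _ => exists _ : nat, False) (fun _ => False)) in H by firstorder.
  destruct (P_nonneg _ F_empty) as [Hp|Hp]; auto. exfalso.
  set (p := P (fun _ => False)) in *.
  destruct (H p Hp) as [N HN]. specialize (HN (S N) ltac:(lia)).
  rewrite sum_f_R0_const in HN. unfold R_dist in HN.
  rewrite (S_INR (S N)), S_INR in HN. pose proof (pos_INR N).
  rewrite Rabs_right in HN by nra. nra.
Qed.

Lemma P_add A B : F A -> F B -> (forall w, A w -> B w -> False) ->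
  P (fun w => A w \/ B w) = P A + P B.
Proof.
  intros HA HB Hd.
  assert (Hdisj : forall i j w, i <> j -> seq_of_two A B i w -> seq_of_two A B j w -> False).
  { intros [|[|i]] [|[|j]] w Hij; simpl; try tauto; try lia; eauto. }
  pose proof (P_sigma_additive _ (fun n => F_seq_of_two A B n HA HB) Hdisj) as H.
  rewrite (P_ext _ _ (seq_of_two_union A B)) in H.
  apply (uniqueness_sum _ _ _ H). intros e He. exists 1%nat. intros n Hn.
  replace (sum_f_R0 (fun n => P (seq_of_two A B n)) n) with (P A + P B).
  { unfold R_dist. rewrite Rminus_diag, Rabs_R0. lra. }
  induction n as [|n IH]; [lia|]. destruct n as [|n]; [simpl; ring|].
  simpl sum_f_R0 in *. rewrite <- IH by lia. simpl. rewrite P_empty. ring.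
Qed.

Lemma P_compl A : F A -> P (fun w => ~ A w) = 1 - P A.
Proof.
  intros HA. rewrite <- P_full, (P_ext (fun _ => True) (fun w => A w \/ ~ A w)) by (intros; tauto).
  rewrite P_add; auto using F_compl. ring.
Qed.

Lemma P_diff A B : F A -> F B -> (forall w, A w -> B w) ->
  P (fun w => B w /\ ~ A w) = P B - P A.
Proof.
  intros HA HB Hs. rewrite (P_ext B (fun w => A w \/ (B w /\ ~ A w))) by (intros w; specialize (Hs w); tauto).
  rewrite P_add; auto using F_and, F_compl; [ring | tauto].
Qed.

Lemma P_mono A B : F A -> F B -> (forall w, A w -> B w) -> P A <= P B.
Proof.
  intros HA HB Hs. pose proof (P_diff A B HA HB Hs).
  pose proof (P_nonneg (fun w => B w /\ ~ A w) ltac:(auto using F_and, F_compl)). lra.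
Qed.

Lemma P_le_1 A : F A -> P A <= 1.
Proof. intros. rewrite <- P_full. apply P_mono; auto using F_full. Qed.

Lemma P_union_increasing (A : nat -> Omega -> Prop) : (forall n, F (A n)) ->
  (forall n w, A n w -> A (S n) w) ->
  Un_cv (fun n => P (A n)) (P (fun w => exists n, A n w)).
Proof.
  intros HF Hm.
  assert (Hmono : forall i j w, (i <= j)%nat -> A i w -> A j w) by (induction 1; auto).
  set (D := fun n => match n with O => A O | S m => fun w => A (S m) w /\ ~ A m w end).
  assert (HD : forall n, F (D n)) by (intros [|n]; simpl; auto using F_and, F_compl).
  assert (Hdis : forall i j w, (i < j)%nat -> D i w -> D j w -> False).
  { intros i j w Hij Hi Hj. destruct j as [|j]; [lia|]. destruct Hj as [_ Hj].
    apply Hj, (Hmono i); [lia|].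
    destruct i; simpl in Hi; tauto. }
  pose proof (P_sigma_additive D HD) as H.
  rewrite (P_ext _ (fun w => exists n, A n w)) in H.
  2: { intros w; split.
       - intros [[|n] Hn]; simpl in Hn; [eauto|]. exists (S n); tauto.
       - intros [n Hn]. induction n as [|n IH]; [exists O; auto|].
         destruct (classic (A n w)); auto. exists (S n); simpl; auto. }
  assert (Hpart : forall n, sum_f_R0 (fun n => P (D n)) n = P (A n)).
  { induction n as [|n IH]; simpl; auto. rewrite IH, P_diff; auto. ring. }
  intros e He. destruct (H ltac:(intros i j w Hij; destruct (Nat.lt_gt_cases i j) as [[|] _];
                                 eauto) e He) as [N HN].
  exists N. intros n Hn. rewrite <- Hpart. apply HN; auto.
Qed.

Lemma P_inter_decreasing (A : nat -> Omega -> Prop) : (forall n, F (A n)) ->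
  (forall n w, A (S n) w -> A n w) ->
  Un_cv (fun n => P (A n)) (P (fun w => forall n, A n w)).
Proof.
  intros HF Hm.
  pose proof (P_union_increasing (fun n w => ~ A n w) ltac:(intros; apply F_compl; auto)
                ltac:(intros n w H1 H2; apply H1; auto)) as H.
  cbv beta in H.
  rewrite (P_ext (fun w => exists n, ~ A n w) (fun w => ~ forall n, A n w)) in H
    by (intros w; split; [firstorder | intros Hn; apply NNPP; intros Hc; apply Hn;
                                       intros n; apply NNPP; eauto]).
  rewrite P_compl in H by (apply F_all; auto).
  apply Un_cv_ext with (fun n => 1 - (1 - P (A n))); [intros; ring|].
  replace (P (fun w => forall n, A n w)) with (1 - (1 - P (fun w => forall n, A n w))) by ring.
  apply CV_minus; [apply Un_cv_const|].
  apply (Un_cv_ext (fun n => P (fun w => ~ A n w))); auto. intros; apply P_compl; auto.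
Qed.

Lemma F_finite_union (E : nat -> Omega -> Prop) N : (forall t, F (E t)) ->
  F (fun w => exists t, (t < N)%nat /\ E t w).
Proof.
  intros HE. induction N as [|N IH].
  - apply (F_ext _ _ F_empty). intros w; split; [tauto | intros [t [Ht _]]; lia].
  - apply (F_ext _ _ (F_or _ _ IH (HE N))). intros w; split.
    + intros [[t [Ht H]]|H]; [exists t | exists N]; split; auto; lia.
    + intros [t [Ht H]]. destruct (Nat.eq_dec t N); subst; auto.
      left; exists t; split; auto; lia.
Qed.

Lemma P_finite_disjoint_union (E : nat -> Omega -> Prop) N : (forall t, F (E t)) ->
  (forall t t' w, t <> t' -> E t w -> E t' w -> False) ->
  P (fun w => exists t, (t < N)%nat /\ E t w) = sumR (fun t => P (E t)) N.
Proof.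
  intros HE Hd. induction N as [|N IH].
  - simpl. rewrite <- P_empty. apply P_ext. intros w; split; [intros [t [Ht _]]; lia | tauto].
  - simpl. rewrite <- IH, <- P_add; auto using F_finite_union.
    + apply P_ext. intros w; split.
      * intros [t [Ht H]]. destruct (Nat.eq_dec t N); subst; auto.
        left; exists t; split; auto; lia.
      * intros [[t [Ht H]]|H]; [exists t | exists N]; split; auto; lia.
    + intros w [t [Ht H1]] H2. apply (Hd t N w); auto; lia.
Qed.

End ProbSpace.

Lemma poch_ratio_mono K m c j : 0 < K -> K <= m -> 0 < c ->
  poch K j / poch (c + K) j <= poch m j / poch (c + m) j.
Proof.
  intros HK Hm Hc. unfold poch.
  rewrite !prodR_div by (intros i _; pose proof (pos_INR i); lra).
  apply prodR_le. intros i _. pose proof (pos_INR i). split; [apply Rdiv_le_0_compat; lra|].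
  apply Rmult_le_reg_r with ((c + K + INR i) * (c + m + INR i)); [nra|].
  replace ((K + INR i) / (c + K + INR i) * ((c + K + INR i) * (c + m + INR i)))
    with ((K + INR i) * (c + m + INR i)) by (field; lra).
  replace ((m + INR i) / (c + m + INR i) * ((c + K + INR i) * (c + m + INR i)))
    with ((m + INR i) * (c + K + INR i)) by (field; lra).
  nra.
Qed.

Lemma poch_ratio_le_1 K c j : 0 < K -> 0 < c -> poch K j / poch (c + K) j <= 1.
Proof.
  intros HK Hc. unfold poch. rewrite prodR_div by (intros i _; pose proof (pos_INR i); lra).
  replace 1 with (prodR (fun _ => 1) j) by (induction j as [|j IH]; simpl; [|rewrite IH]; ring).
  apply prodR_le. intros i _. pose proof (pos_INR i). split; [apply Rdiv_le_0_compat; lra|].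
  apply Rmult_le_reg_r with (c + K + INR i); [lra|].
  unfold Rdiv. rewrite Rmult_assoc, Rinv_l by lra. lra.
Qed.

Lemma Un_cv_poch (u : nat -> R) l j : Un_cv u l -> Un_cv (fun n => poch (u n) j) (poch l j).
Proof.
  intros H. unfold poch. induction j as [|j IH]; simpl; [apply Un_cv_const|].
  apply CV_mult; auto. apply CV_plus; auto. apply Un_cv_const.
Qed.

Lemma Un_cv_sumR (G : nat -> nat -> R) (l : nat -> R) N :
  (forall j, Un_cv (fun n => G n j) (l j)) -> Un_cv (fun n => sumR (G n) N) (sumR l N).
Proof. intros H. induction N as [|N IH]; simpl; [apply Un_cv_const | apply CV_plus; auto]. Qed.

Lemma nat_incr_bounded_ultimately_const (u : nat -> nat) B :
  (forall n, (u n <= u (S n))%nat) -> (forall n, (u n <= B)%nat) ->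
  exists s N, forall n, (N <= n)%nat -> u n = s.
Proof.
  intros Hm Hb.
  assert (Hmono : forall n n', (n <= n')%nat -> (u n <= u n')%nat).
  { induction 1; auto. specialize (Hm m); lia. }
  assert (Hgap : forall d n0, (forall n, (u n <= u n0 + d)%nat) ->
                 exists s N, forall n, (N <= n)%nat -> u n = s).
  { induction d as [|d IH]; intros n0 H.
    - exists (u n0), n0. intros n Hn. specialize (H n). specialize (Hmono _ _ Hn). lia.
    - destruct (classic (exists n1, (u n0 < u n1)%nat)) as [[n1 Hn1]|Hno].
      + apply (IH n1). intros n. specialize (H n). lia.
      + exists (u n0), n0. intros n Hn. specialize (Hmono _ _ Hn).
        assert (~ (u n0 < u n)%nat) by eauto. lia. }
  apply (Hgap B O). intros n. specialize (Hb n). lia.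
Qed.

(** * The GWD probability mass function *)

Definition GWD_const (a K rho : R) : R := rising rho K / rising (rho + a) K.

Lemma GWD_pmf_poch a rho K j : 0 < a -> 0 < rho -> 0 < K ->
  GWD_pmf a K rho j
  = GWD_const a K rho * (poch a j * (poch K j / poch (rho + a + K) j)) / INR (fact j).
Proof. intros. unfold GWD_pmf, GWD_const. rewrite !rising_poch by lra. unfold Rdiv. ring. Qed.

Lemma GWD_const_pos a rho K : 0 < a -> 0 < rho -> 0 < K -> 0 < GWD_const a K rho.
Proof.
  intros. unfold GWD_const, rising.
  pose proof (Gamma_pos rho ltac:(lra)). pose proof (Gamma_pos (rho + K) ltac:(lra)).
  pose proof (Gamma_pos (rho + a) ltac:(lra)). pose proof (Gamma_pos (rho + a + K) ltac:(lra)).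
  apply Rdiv_lt_0_compat; apply Rdiv_lt_0_compat; auto.
Qed.

Lemma GWD_const_Gamma_ratio a rho K : 0 < a -> 0 < rho -> 0 < K ->
  GWD_const a K rho = Gamma (rho + K) / Gamma (rho + K + a) * (Gamma (rho + a) / Gamma rho).
Proof.
  intros. unfold GWD_const, rising. replace (rho + K + a) with (rho + a + K) by ring.
  pose proof (Gamma_pos rho ltac:(lra)). pose proof (Gamma_pos (rho + a) ltac:(lra)).
  pose proof (Gamma_pos (rho + a + K) ltac:(lra)). field. lra.
Qed.

Lemma Un_cv_Gamma (u : nat -> R) z : 0 < z -> Un_cv u z -> Un_cv (fun n => Gamma (u n)) (Gamma z).
Proof. intros. apply continuity_seq; auto. apply Gamma_continuous; auto. Qed.

Lemma GWD_const_cv a rho (u : nat -> R) m : 0 < a -> 0 < rho -> 0 < m -> Un_cv u m ->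
  Un_cv (fun n => GWD_const a (u n) rho) (GWD_const a m rho).
Proof.
  intros Ha Hr Hm Hu. unfold GWD_const, rising.
  assert (Hshift : forall c, Un_cv (fun n => c + u n) (c + m))
    by (intros c; apply CV_plus; auto; apply Un_cv_const).
  pose proof (Gamma_pos rho Hr). pose proof (Gamma_pos (rho + a) ltac:(lra)).
  pose proof (Gamma_pos (rho + a + m) ltac:(lra)).
  apply Un_cv_div; [| | apply Rgt_not_eq, Rdiv_lt_0_compat; auto];
    (apply Un_cv_div; [apply Un_cv_Gamma; auto; lra | apply Un_cv_const | lra]).
Qed.

Lemma GWD_pmf_cv a rho (u : nat -> R) m j : 0 < a -> 0 < rho -> 0 < m ->
  Un_cv u m -> (forall n, 0 < u n) ->
  Un_cv (fun n => GWD_pmf a (u n) rho j) (GWD_pmf a m rho j).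
Proof.
  intros Ha Hr Hm Hu Hpos.
  apply Un_cv_ext with (fun n => GWD_const a (u n) rho
                          * (poch a j * (poch (u n) j / poch (rho + a + u n) j)) / INR (fact j)).
  { intros n. rewrite GWD_pmf_poch; auto. }
  rewrite GWD_pmf_poch by auto.
  apply Un_cv_div; [| apply Un_cv_const | apply Rgt_not_eq, INR_fact_lt_0].
  apply CV_mult; [apply GWD_const_cv; auto|]. apply CV_mult; [apply Un_cv_const|].
  apply Un_cv_div; [apply Un_cv_poch; auto | | apply Rgt_not_eq, poch_pos; lra].
  apply Un_cv_poch, CV_plus; auto. apply Un_cv_const.
Qed.

Lemma GWD_pmf_dominated a rho K m j : 0 < a -> 0 < rho -> 0 < K -> K <= m ->
  GWD_pmf a K rho j <= GWD_const a K rho / GWD_const a m rho * GWD_pmf a m rho j.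
Proof.
  intros Ha Hr HK Hm. rewrite !GWD_pmf_poch by lra.
  pose proof (GWD_const_pos a rho K Ha Hr HK). pose proof (GWD_const_pos a rho m Ha Hr ltac:(lra)).
  pose proof (poch_pos a j Ha). pose proof (INR_fact_lt_0 j).
  pose proof (poch_pos (rho + a + m) j ltac:(lra)).
  pose proof (poch_ratio_mono K m (rho + a) j HK Hm ltac:(lra)).
  replace (GWD_const a K rho / GWD_const a m rho
           * (GWD_const a m rho * (poch a j * (poch m j / poch (rho + a + m) j)) / INR (fact j)))
    with (GWD_const a K rho * (poch a j * (poch m j / poch (rho + a + m) j)) / INR (fact j))
    by (field; lra).
  unfold Rdiv at 1 3. apply Rmult_le_compat_r; [left; apply Rinv_0_lt_compat; lra|].
  apply Rmult_le_compat_l; [lra|]. apply Rmult_le_compat_l; lra.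
Qed.

Lemma GWD_pmf_le_Gamma_ratio a rho K j : 0 < a -> 0 < rho -> 0 < K ->
  GWD_pmf a K rho j
  <= Gamma (rho + K) / Gamma (rho + K + a) * (Gamma (rho + a) / Gamma rho)
     * (poch a j / INR (fact j)).
Proof.
  intros Ha Hr HK. rewrite GWD_pmf_poch, GWD_const_Gamma_ratio by auto.
  set (c := Gamma (rho + K) / Gamma (rho + K + a) * (Gamma (rho + a) / Gamma rho)).
  assert (Hc : 0 <= c).
  { apply Rmult_le_pos; apply Rdiv_le_0_compat; try (left; apply Gamma_pos); try apply Gamma_pos; lra. }
  pose proof (poch_ratio_le_1 K (rho + a) j HK ltac:(lra)).
  pose proof (poch_pos a j Ha). pose proof (INR_fact_lt_0 j).
  pose proof (poch_pos (rho + a + K) j ltac:(lra)).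
  assert (0 <= poch K j / poch (rho + a + K) j)
    by (apply Rdiv_le_0_compat; [left; apply poch_pos|]; lra).
  assert (0 <= c * (poch a j / INR (fact j))) by (apply Rmult_le_pos; [| apply Rdiv_le_0_compat]; lra).
  replace (c * (poch a j * (poch K j / poch (rho + a + K) j)) / INR (fact j))
    with (c * (poch a j / INR (fact j)) * (poch K j / poch (rho + a + K) j)) by (field; lra).
  rewrite <- (Rmult_1_r (c * (poch a j / INR (fact j)))) at 2.
  apply Rmult_le_compat_l; auto.
Qed.

Definition depends_on (N : nat) (Q : (nat -> nat) -> Prop) : Prop :=
  forall f g, (forall i, (i < N)%nat -> f i = g i) -> Q f -> Q g.

Definition fupdate (f : nat -> nat) (n t : nat) : nat -> nat :=
  fun i => if Nat.eqb i n then t else f i.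

Lemma fupdate_lt f n t i : (i < n)%nat -> fupdate f n t i = f i.
Proof. intros. unfold fupdate. destruct (Nat.eqb_spec i n); [lia | auto]. Qed.

Lemma fupdate_eq f n t : fupdate f n t n = t.
Proof. unfold fupdate. rewrite Nat.eqb_refl. auto. Qed.

Lemma fupdate_same f n i : (i < S n)%nat -> fupdate f n (f n) i = f i.
Proof. intros. unfold fupdate. destruct (Nat.eqb_spec i n); subst; auto. Qed.

Section Model.
Variable Omega : Type.
Variable F : (Omega -> Prop) -> Prop.
Variable P : (Omega -> Prop) -> R.
Hypothesis HP : is_prob_space Omega F P.
Variable X : nat -> Omega -> nat.
Hypothesis HX : forall j n, F (fun w => X j w = n).
Variables a rho : R.
Variable k : nat -> R.
Hypothesis Ha : 0 < a.
Hypothesis Hr : 0 < rho.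
Hypothesis Hk : forall j, 0 < k j.
Hypothesis HMG : forall (s : nat) (x : nat -> nat), (1 <= s)%nat ->
  P (fun w => forall i, (i < s)%nat -> X i w = x i) = MGWD_pmf a k s rho x.
#[local] Set Default Proof Using "All".

(* Condition on the value [t] of [X N] and use countable unions. *)
Lemma F_depends_on N Q : depends_on N Q -> F (fun w => Q (fun i => X i w)).
Proof.
  revert Q. induction N as [|N IH]; intros Q HQ.
  - destruct (classic (Q (fun _ => O))) as [H|H].
    + apply (F_ext _ F P HP _ _ (F_full _ F P HP)). intros w; split; auto.
      intros _. apply (HQ (fun _ => O)); auto. intros; lia.
    + apply (F_ext _ F P HP _ _ (F_empty _ F P HP)). intros w; split; [tauto|].
      intros H'. apply H, (HQ (fun i => X i w)); auto. intros; lia.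
  - apply (F_ext _ F P HP (fun w => exists t, X N w = t /\ Q (fupdate (fun i => X i w) N t))).
    + apply (F_union _ F P HP). intros t. apply (F_and _ F P HP); auto.
      apply (IH (fun f => Q (fupdate f N t))).
      intros f g Hfg. apply HQ. intros i Hi. unfold fupdate.
      destruct (Nat.eqb_spec i N); auto. apply Hfg; lia.
    + intros w; split.
      * intros [t [<- Ht]]. apply (HQ _ _ (fupdate_same (fun i => X i w) N) Ht).
      * intros H. exists (X N w). split; auto.
        apply (HQ (fun i => X i w)); auto. intros i Hi. symmetry. apply fupdate_same; auto.
Qed.

Definition block_sum (p L : nat) (w : Omega) : nat := sumN (fun i => X (p + i)%nat w) L.

Definition cyl_block_ev (p : nat) (y : nat -> nat) (L j : nat) (w : Omega) : Prop :=
  (forall i, (i < p)%nat -> X i w = y i) /\ block_sum p L w = j.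

(* The law of [(X_0, ..., X_(p-1), X_p + ... + X_(p+L-1))] is again MGWD, with
   parameters [k_0, ..., k_(p-1), k_p + ... + k_(p+L-1)]. *)
Definition cyl_block_prob (p : nat) (y : nat -> nat) (L j : nat) : R :=
  rising rho (sumR k (p + L)) * rising a (INR (sumN y p + j))
  / rising (rho + a) (sumR k (p + L) + INR (sumN y p + j))
  * prodR (fun i => rising (k i) (INR (y i)) / INR (fact (y i))) p
  * negbin_coef (sumR (fun i => k (p + i)%nat) L) j.

Lemma F_cyl_block_ev p y L j : F (cyl_block_ev p y L j).
Proof.
  apply (F_depends_on (p + L) (fun f => (forall i, (i < p)%nat -> f i = y i)
                                         /\ sumN (fun i => f (p + i)%nat) L = j)).
  intros f g Hfg [H1 H2]. split.
  - intros i Hi. rewrite <- Hfg by lia. auto.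
  - rewrite <- H2. apply sumN_ext. intros. symmetry; apply Hfg; lia.
Qed.

Lemma block_sum_S p L w : block_sum p (S L) w = (X p w + block_sum (S p) L w)%nat.
Proof.
  unfold block_sum. rewrite sumN_shift, Nat.add_0_r. f_equal.
  apply sumN_ext. intros. f_equal. lia.
Qed.

Lemma cyl_block_ev_S p y L j w :
  cyl_block_ev p y (S L) j w
  <-> exists t, (t < S j)%nat /\ cyl_block_ev (S p) (fupdate y p t) L (j - t) w.
Proof.
  unfold cyl_block_ev. rewrite block_sum_S. split.
  - intros [H1 H2]. exists (X p w). split; [lia|]. split; [|lia].
    intros i Hi. unfold fupdate. destruct (Nat.eqb_spec i p); subst; auto. apply H1; lia.
  - intros [t [Ht [H1 H2]]]. assert (X p w = t) by (rewrite H1 by lia; apply fupdate_eq).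
    split; [|lia]. intros i Hi. rewrite H1 by lia. apply fupdate_lt; auto.
Qed.

Lemma cyl_block_prob_split p y L j t : (t < S j)%nat ->
  cyl_block_prob (S p) (fupdate y p t) L (j - t)
  = rising rho (sumR k (p + S L)) * rising a (INR (sumN y p + j))
    / rising (rho + a) (sumR k (p + S L) + INR (sumN y p + j))
    * prodR (fun i => rising (k i) (INR (y i)) / INR (fact (y i))) p
    * (negbin_coef (k p) t * negbin_coef (sumR (fun i => k (S p + i)%nat) L) (j - t)).
Proof.
  intros Ht. unfold cyl_block_prob. rewrite <- plus_n_Sm, Nat.add_succ_l.
  replace (sumN (fupdate y p t) (S p) + (j - t))%nat with (sumN y p + j)%nat.
  2: { simpl. rewrite fupdate_eq, (sumN_ext (fupdate y p t) y p) by (intros; apply fupdate_lt; auto). lia. }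
  rewrite prodR_S, fupdate_eq, (prodR_ext _ (fun i => rising (k i) (INR (y i)) / INR (fact (y i))))
    by (intros; rewrite fupdate_lt; auto).
  rewrite (rising_poch (k p) t) by auto. unfold negbin_coef. ring.
Qed.

Lemma P_cyl_block L : forall p y j, (1 <= p + L)%nat ->
  P (cyl_block_ev p y L j) = cyl_block_prob p y L j.
Proof.
  induction L as [|L IH]; intros p y j Hp.
  - unfold cyl_block_prob. rewrite Nat.add_0_r in *. destruct j as [|j].
    + rewrite negbin_coef_0, Rmult_1_r, Nat.add_0_r.
      rewrite (P_ext _ F P HP _ (fun w => forall i, (i < p)%nat -> X i w = y i))
        by (intros w; unfold cyl_block_ev, block_sum; simpl; tauto).
      rewrite HMG by auto. reflexivity.
    + simpl sumR. rewrite negbin_coef_zero_S, Rmult_0_r, <- (P_empty _ F P HP).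
      apply (P_ext _ F P HP). intros w. unfold cyl_block_ev, block_sum; simpl. lia.
  - rewrite (P_ext _ F P HP _ _ (cyl_block_ev_S p y L j)).
    rewrite (P_finite_disjoint_union _ F P HP).
    2: { intros; apply F_cyl_block_ev. }
    2: { intros t t' w Hne [H1 _] [H2 _]. apply Hne.
         rewrite <- (fupdate_eq y p t), <- (fupdate_eq y p t'), <- H1, <- H2 by lia. auto. }
    rewrite (sumR_ext _ (fun t => cyl_block_prob (S p) (fupdate y p t) L (j - t)))
      by (intros; apply IH; lia).
    rewrite (sumR_ext _ _ _ (fun t Ht => cyl_block_prob_split p y L j t Ht)).
    rewrite sumR_scal. fold (negbin_conv (k p) (sumR (fun i => k (S p + i)%nat) L) j).
    rewrite negbin_vandermonde. unfold cyl_block_prob. do 3 f_equal.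
    rewrite sumR_shift, Nat.add_0_r. f_equal. apply sumR_ext. intros. f_equal. lia.
Qed.

Lemma partial_sum_GWD n j : (1 <= n)%nat ->
  P (fun w => partial_sum X w n = j) = GWD_pmf a (sumR k n) rho j.
Proof.
  intros Hn. pose proof (sumR_pos k n Hk Hn) as HK.
  rewrite (P_ext _ F P HP _ (cyl_block_ev O (fun _ => O) n j))
    by (intros w; unfold cyl_block_ev, block_sum, partial_sum; simpl; intuition lia).
  rewrite P_cyl_block by lia. unfold cyl_block_prob, GWD_pmf, negbin_coef. simpl.
  set (K := sumR k n) in *. change (sumR (fun i => k i) n) with K.
  rewrite rising_add, !rising_poch by lra.
  assert (0 < rising (rho + a) K) by (apply Rdiv_lt_0_compat; apply Gamma_pos; lra).
  pose proof (poch_pos (rho + a + K) j ltac:(lra)). pose proof (INR_fact_lt_0 j).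
  field. lra.
Qed.


(** * The law of the sum *)

Definition bounded_ev (B : nat) (w : Omega) : Prop := forall n, (partial_sum X w n <= B)%nat.

Lemma partial_sum_mono w n n' : (n <= n')%nat -> (partial_sum X w n <= partial_sum X w n')%nat.
Proof. induction 1; auto. unfold partial_sum in *. simpl. lia. Qed.

Lemma F_partial_sum_le n B : F (fun w => (partial_sum X w n <= B)%nat).
Proof. apply (F_depends_on n (fun f => (sumN f n <= B)%nat)). intros f g Hfg. rewrite (sumN_ext f g n); auto. Qed.

Lemma F_partial_sum_eq n j : F (fun w => partial_sum X w n = j).
Proof. apply (F_depends_on n (fun f => sumN f n = j)). intros f g Hfg. rewrite (sumN_ext f g n); auto. Qed.

Lemma F_bounded_ev B : F (bounded_ev B).
Proof. apply (F_all _ F P HP). intros; apply F_partial_sum_le. Qed.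

Lemma bounded_ev_S B w : bounded_ev B w -> bounded_ev (S B) w.
Proof. intros H n. specialize (H n). lia. Qed.

Lemma P_partial_sum_le n B : (1 <= n)%nat ->
  P (fun w => (partial_sum X w n <= B)%nat) = sumR (fun j => GWD_pmf a (sumR k n) rho j) (S B).
Proof.
  intros Hn.
  rewrite (P_ext _ F P HP _ (fun w => exists j, (j < S B)%nat /\ partial_sum X w n = j))
    by (intros w; split; [exists (partial_sum X w n); split; auto; lia | intros [j [Hj <-]]; lia]).
  rewrite (P_finite_disjoint_union _ F P HP); [| intros; apply F_partial_sum_eq | intros; lia].
  apply sumR_ext. intros; apply partial_sum_GWD; auto.
Qed.

Lemma P_bounded_ev_limit B :
  Un_cv (fun n => P (fun w => (partial_sum X w (S n) <= B)%nat)) (P (bounded_ev B)).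
Proof.
  pose proof (P_inter_decreasing _ F P HP (fun n w => (partial_sum X w (S n) <= B)%nat)
                (fun n => F_partial_sum_le (S n) B)) as H.
  rewrite (P_ext _ F P HP _ (bounded_ev B)) in H.
  - apply H. intros n w Hw. pose proof (partial_sum_mono w (S n) (S (S n)) ltac:(lia)). lia.
  - intros w. unfold bounded_ev. split; auto. intros Hw [|n]; auto.
    unfold partial_sum; simpl. lia.
Qed.

Lemma S_eq_bounded_ev w s : S_eq X w s -> bounded_ev s w.
Proof. intros [N HN] n. rewrite <- (HN (max n N)) by lia. apply partial_sum_mono; lia. Qed.

Lemma S_eq_not_bounded_ev w s : S_eq X w (S s) -> ~ bounded_ev s w.
Proof. intros [N HN] H. specialize (H N). rewrite HN in H; lia. Qed.

Lemma bounded_ev_ultimately_const w B : bounded_ev B w -> exists s, S_eq X w s.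
Proof.
  intros HB. destruct (nat_incr_bounded_ultimately_const (partial_sum X w) B
                        (fun n => partial_sum_mono w n (S n) (Nat.le_succ_diag_r n)) HB)
    as [s [N HN]].
  exists s, N; auto.
Qed.

Lemma bounded_ev_S_eq w s :
  bounded_ev s w -> (s = O \/ exists s', s = S s' /\ ~ bounded_ev s' w) -> S_eq X w s.
Proof.
  intros HB Hs. destruct (bounded_ev_ultimately_const w s HB) as [v Hv].
  replace s with v; auto. pose proof (S_eq_bounded_ev w v Hv) as Hvb.
  destruct Hv as [N HN]. specialize (HB N). rewrite HN in HB by lia.
  destruct Hs as [->|[s' [-> Hnb]]]; [lia|].
  destruct (Nat.le_gt_cases (S s') v); [lia|]. exfalso. apply Hnb.
  intros n. specialize (Hvb n). lia.
Qed.

Lemma S_finite_iff_bounded w : (exists s, S_eq X w s) <-> exists B, bounded_ev B w.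
Proof.
  split.
  - intros [s Hs]. exists s. apply S_eq_bounded_ev; auto.
  - intros [B HB]. apply (bounded_ev_ultimately_const w B HB).
Qed.

Section Convergent.
Variable m : R.
Hypothesis Hm : infinite_sum k m.

Let K (n : nat) : R := sumR k (S n).

Lemma K_cv : Un_cv K m.
Proof. intros e He. destruct (Hm e He) as [N HN]. exists N. intros n Hn. unfold K. rewrite sumR_sum_f_R0. auto. Qed.

Lemma K_le n : K n <= m.
Proof. unfold K. rewrite sumR_sum_f_R0. apply sum_incr; [exact Hm | intros; left; apply Hk]. Qed.

Lemma K_pos n : 0 < K n.
Proof. apply sumR_pos; auto; lia. Qed.

Lemma m_pos : 0 < m.
Proof. pose proof (K_pos 0). pose proof (K_le 0). lra. Qed.

Let cdf (B : nat) : R := sumR (fun j => GWD_pmf a m rho j) (S B).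

Lemma P_bounded_ev_cdf B : P (bounded_ev B) = cdf B.
Proof.
  apply (UL_sequence _ _ _ (P_bounded_ev_limit B)).
  apply Un_cv_ext with (fun n => sumR (fun j => GWD_pmf a (K n) rho j) (S B)).
  { intros n. symmetry. apply P_partial_sum_le. lia. }
  apply Un_cv_sumR. intros j. apply GWD_pmf_cv; auto using m_pos, K_cv, K_pos.
Qed.

Lemma P_S_eq s : P (fun w => S_eq X w s) = GWD_pmf a m rho s.
Proof.
  destruct s as [|s].
  - rewrite (P_ext _ F P HP _ (bounded_ev 0)), P_bounded_ev_cdf.
    + unfold cdf; simpl. ring.
    + intros w; split; [apply S_eq_bounded_ev | intros H; apply bounded_ev_S_eq; auto].
  - rewrite (P_ext _ F P HP _ (fun w => bounded_ev (S s) w /\ ~ bounded_ev s w)).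
    + rewrite (P_diff _ F P HP), !P_bounded_ev_cdf; auto using F_bounded_ev, bounded_ev_S.
      unfold cdf. simpl sumR. ring.
    + intros w; split.
      * intros H; split; [apply S_eq_bounded_ev | apply S_eq_not_bounded_ev]; auto.
      * intros [H1 H2]. apply bounded_ev_S_eq; eauto.
Qed.

Let T : R := P (fun w => exists B, bounded_ev B w).

Lemma cdf_le_T B : cdf B <= T.
Proof.
  rewrite <- P_bounded_ev_cdf. apply (P_mono _ F P HP); eauto using F_bounded_ev.
  apply (F_union _ F P HP), F_bounded_ev.
Qed.

Let lam (n : nat) : R := GWD_const a (K n) rho / GWD_const a m rho.

Lemma lam_nonneg n : 0 <= lam n.
Proof.
  apply Rdiv_le_0_compat; [left|]; apply GWD_const_pos; auto using K_pos, m_pos.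
Qed.

Lemma lam_cv : Un_cv lam 1.
Proof.
  pose proof (GWD_const_pos a rho m Ha Hr m_pos).
  replace 1 with (GWD_const a m rho / GWD_const a m rho) by (field; lra).
  apply Un_cv_div; [apply GWD_const_cv; auto using m_pos, K_cv | apply Un_cv_const | lra].
Qed.

(* [GWD(a, K n) <= lam n * GWD(a, m)] termwise, so the mass [S_(n+1)] puts
   in [(B, B']] is at most [lam n] times [cdf B' - cdf B <= T - cdf B]. *)
Lemma P_partial_sum_gt_le n B :
  1 - P (fun w => (partial_sum X w (S n) <= B)%nat) <= lam n * (T - cdf B).
Proof.
  pose proof (P_union_increasing _ F P HP (fun B' w => (partial_sum X w (S n) <= B')%nat)
                (fun B' => F_partial_sum_le (S n) B') ltac:(intros; cbv beta in *; lia)) as Hc.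
  cbv beta in Hc.
  rewrite (P_ext _ F P HP _ (fun _ => True)), (P_full _ F P HP) in Hc
    by (intros w; split; auto; intros; exists (partial_sum X w (S n)); lia).
  apply (Un_cv_le_eventually _ _ _ B
           (CV_minus _ _ _ _ Hc (Un_cv_const (P (fun w => (partial_sum X w (S n) <= B)%nat))))).
  intros B' HB'. rewrite !P_partial_sum_le by lia. fold (K n).
  apply Rle_trans with (lam n * (cdf B' - cdf B)).
  - apply sumR_diff_le; [|lia]. intros j. apply GWD_pmf_dominated; auto using K_pos, K_le.
  - apply Rmult_le_compat_l; [apply lam_nonneg|]. pose proof (cdf_le_T B'). lra.
Qed.

Lemma P_S_finite : P (fun w => exists s, S_eq X w s) = 1.
Proof.
  rewrite (P_ext _ F P HP _ _ S_finite_iff_bounded). fold T.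
  assert (T <= 1) by (apply (P_le_1 _ F P HP), (F_union _ F P HP), F_bounded_ev).
  assert (1 - cdf O <= T - cdf O).
  { apply (Rle_cv_lim (fun n => P_partial_sum_gt_le n O)).
    - apply CV_minus; [apply Un_cv_const|]. rewrite <- P_bounded_ev_cdf. apply P_bounded_ev_limit.
    - pose proof (CV_mult _ _ _ _ lam_cv (Un_cv_const (T - cdf O))) as Hlim.
      rewrite Rmult_1_l in Hlim. exact Hlim. }
  lra.
Qed.

End Convergent.

(* [P (S <= B) <= P (S_n <= B)], and [GWD_pmf_le_Gamma_ratio] bounds the latter by
   [Gamma (rho + K) / Gamma (rho + K + a)] times a constant, with [K = K_n -> oo]. *)
Lemma P_bounded_ev_divergent B : cv_infty (sum_f_R0 k) -> P (bounded_ev B) = 0.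
Proof.
  intros Hinf.
  set (W := Gamma (rho + a) / Gamma rho * sumR (fun j => poch a j / INR (fact j)) (S B)).
  assert (HW : 0 <= W).
  { apply Rmult_le_pos; [apply Rdiv_le_0_compat; [left|]; apply Gamma_pos; lra|].
    apply sumR_nonneg. intros j. apply Rdiv_le_0_compat; [left; apply poch_pos | apply INR_fact_lt_0]; auto. }
  destruct (P_nonneg _ F P HP _ (F_bounded_ev B)) as [Hpos|]; auto. exfalso.
  set (e := P (bounded_ev B) / (W + 1)).
  assert (He : 0 < e) by (apply Rdiv_lt_0_compat; lra).
  destruct (Gamma_ratio_vanishes a Ha e He) as [x0 Hx0].
  destruct (Hinf (x0 - rho)) as [N HN]. specialize (HN N (le_n N)).
  rewrite <- sumR_sum_f_R0 in HN.
  assert (HK : 0 < sumR k (S N)) by (apply sumR_pos; auto; lia).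
  assert (Hle : P (bounded_ev B) <= sumR (fun j => GWD_pmf a (sumR k (S N)) rho j) (S B)).
  { rewrite <- P_partial_sum_le by lia.
    apply (P_mono _ F P HP); [apply F_bounded_ev | apply F_partial_sum_le | intros w H; apply H]. }
  set (q := Gamma (rho + sumR k (S N)) / Gamma (rho + sumR k (S N) + a)) in *.
  assert (Hq : 0 <= q < e).
  { split; [apply Rdiv_le_0_compat; [left|]; apply Gamma_pos; lra | apply Hx0; lra]. }
  assert (Hsum : sumR (fun j => GWD_pmf a (sumR k (S N)) rho j) (S B) <= q * W).
  { unfold W. rewrite <- Rmult_assoc, <- sumR_scal. apply sumR_le. intros j _.
    apply GWD_pmf_le_Gamma_ratio; auto. }
  assert (e * W < P (bounded_ev B)).
  { unfold e. apply Rmult_lt_reg_r with (W + 1); [lra|].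
    replace (P (bounded_ev B) / (W + 1) * W * (W + 1)) with (P (bounded_ev B) * W) by (field; lra).
    nra. }
  assert (q * W <= e * W) by (apply Rmult_le_compat_r; lra).
  lra.
Qed.

Lemma P_S_inf : cv_infty (sum_f_R0 k) -> P (fun w => S_inf X w) = 1.
Proof.
  intros Hinf.
  assert (Hfin : P (fun w => exists B, bounded_ev B w) = 0).
  { apply (UL_sequence _ _ _ (P_union_increasing _ F P HP _ F_bounded_ev bounded_ev_S)).
    apply (Un_cv_ext (fun _ => 0)); [intros B; rewrite P_bounded_ev_divergent; auto | apply Un_cv_const]. }
  rewrite (P_ext _ F P HP _ (fun w => ~ exists B, bounded_ev B w)).
  - rewrite (P_compl _ F P HP), Hfin by (apply (F_union _ F P HP), F_bounded_ev). ring.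
  - intros w; split.
    + intros Hw [B HB]. destruct (Hw (S B)) as [n Hn]. specialize (HB n). lia.
    + intros Hw B. apply NNPP. intros Hc. apply Hw. exists B. intros n.
      apply Nat.nlt_ge. intros Hn. apply Hc. exists n. lia.
Qed.

End Model.

Theorem theorem1 (Omega : Type) (F : (Omega -> Prop) -> Prop)
  (P : (Omega -> Prop) -> R) (a rho : R) (k : nat -> R)
  (X : nat -> Omega -> nat) :
  is_prob_space Omega F P ->
  0 < a -> 0 < rho -> (forall j, 0 < k j) ->
  (forall j n, F (fun w => X j w = n)) ->
  (forall j n, P (fun w => X j w = n) = GWD_pmf a (k j) rho n) ->
  (forall (s : nat) (x : nat -> nat), (1 <= s)%nat ->
     P (fun w => forall i, (i < s)%nat -> X i w = x i) = MGWD_pmf a k s rho x) ->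
  (forall m : R, infinite_sum k m ->
     P (fun w => exists s, S_eq X w s) = 1
     /\ forall s : nat, P (fun w => S_eq X w s) = GWD_pmf a m rho s)
  /\
  (cv_infty (sum_f_R0 k) -> P (fun w => S_inf X w) = 1).
Proof.
  intros HP Ha Hr Hk HX _ HMG. split.
  - intros m Hm. split.
    + exact (P_S_finite Omega F P HP X HX a rho k Ha Hr Hk HMG m Hm).
    + exact (P_S_eq Omega F P HP X HX a rho k Ha Hr Hk HMG m Hm).
  - exact (P_S_inf Omega F P HP X HX a rho k Ha Hr Hk HMG).
Qed.
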